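(* Let $r:\mathcal T\to\mathbb N\cup\{0\}$ be a function satisfying: (1) $r(\mathscr X)=0$ if and only if $\mathscr X=\mathbf 0$, and $r(\mathscr X)=1$ if and only if $\mathscr X$ is a rank-one tensor; (2) $r$ is constant on equivalence classes of $\sim$; (3) if $\mathscr X$ is a tensor of order $N$ with $\mathscr X\neq\mathbf 0$ and $\mathscr X$ not rank-one, then with $S_0=\{M\mid \mathscr I_{M,N}\text{ is a subtensor of some }\mathscr Y\sim\mathscr X\}$ and $S_1=\{\operatorname{rank}(\mathbf A)\mid \mathbf A\text{ is a submatrix of some }\mathscr Y\sim\mathscr X\}$ we have $r(\mathscr X)=\max(S_0\cup S_1\cup\{2\})$. Then $r=\mu$, where $\mu(\mathscr X)=\min\{s(\mathscr X)\mid s\text{ is a QZC rank function}\}$ for every $\mathscr X\in\mathcal T$.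
   Context: $\mathcal T$ is the collection of all real tensors (of all orders $N\ge1$ and all sizes). A rank-one tensor is one of the form $\mathbf a^{(1)}\circ\cdots\circ\mathbf a^{(N)}$, i.e. $x_{i_1\cdots i_N}=a^{(1)}_{i_1}\cdots a^{(N)}_{i_N}$, with all $\mathbf a^{(n)}$ nonzero vectors. $\mathscr I_{M,N}$ is the order-$N$ tensor of size $M\times\cdots\times M$ with $1$ in positions $(i,\dots,i)$ and $0$ elsewhere. A subtensor of $\mathscr X\in\mathbb R^{I_1\times\cdots\times I_N}$ is a tensor $\mathscr Y\in\mathbb R^{J_1\times\cdots\times J_N}$ with $y_{j_1\cdots j_N}=x_{i_{1j_1}\cdots i_{Nj_N}}$ for some indices $1\le i_{n1}<\cdots<i_{nJ_n}\le I_n$. A submatrix of $\mathscr X$ means a subtensor with $J_n=1$ for all but at most two modes, viewed as a vector or matrix (a vector having rank $1$ if nonzero, $0$ otherwise). For $\pi\in S_N$ (the symmetric group on $\{1,\dots,N\}$), the mode-permutation of $\mathscr X$ is the tensor $\mathscr Y$ with $y_{i_1\cdots i_N}=x_{i_{\pi(1)}\cdots i_{\pi(N)}}$ (with correspondingly permuted dimensions). The relation $\sim$ is the smallest equivalence relation on $\mathcal T$ with $\mathscr X\sim\alpha\mathscr X$ for all $\alpha\in\mathbb R\setminus\{0\}$ and $\mathscr X\sim\mathscr Y$ whenever $\mathscr Y$ is a mode-permutation of $\mathscr X$. A QZC rank function is a function $s:\mathcal T\to\mathbb N\cup\{0\}$ such that: (QZC1) $s(\mathscr X)=0$ iff $\mathscr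 X=\mathbf 0$, and $s(\mathscr X)=1$ iff $\mathscr X$ is rank-one; (QZC2) $s(\mathscr I_{M,N})=M$ whenever $N\ge2$; (QZC3) if $\mathscr X\in\mathbb R^{I_1\times I_2\times1\times\cdots\times1}$ then $s(\mathscr X)$ equals the rank of the corresponding $I_1\times I_2$ matrix; (QZC4) $s(\alpha\mathscr X)=s(\mathscr X)$ for $\alpha\ne0$; (QZC5) $s$ is invariant under mode-permutations; (QZC6) $s(\mathscr Y)\le s(\mathscr X)$ whenever $\mathscr Y$ is a subtensor of $\mathscr X$. *)

From HB Require Import structures.
From mathcomp Require Import all_boot all_order all_algebra.
From mathcomp Require Import reals.
From mathcomp Require Import fingroup perm.
From Stdlib Require Import Relations.
Set Implicit Arguments. Unset Strict Implicit. Unset Printing Implicit Defensive.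
Import Order.TTheory GRing.Theory Num.Theory.
Local Open Scope ring_scope.

Section Tensors.
Variable R : fieldType.

(* index type of an order-N tensor with dimensions d : multi-indices,
   0-based: mode n ranges over 'I_N, position in mode n over 'I_(d_n). *)
Definition tindex (N : nat) (d : N.-tuple nat) :=
  {dffun forall n : 'I_N, 'I_(tnth d n)}.

Record tensor := Tensor {
  tord : nat;
  tdims : tord.-tuple nat;
  tent : {ffun tindex tdims -> R};
  tvalid : (0 < tord)%N && all (fun k => 0 < k)%N tdims
}.

Definition dim (X : tensor) (n : nat) : nat := nth 0%N (tdims X) n.

(* entry of X at the multi-index given by i : nat -> nat (mode n |-> i n);
   0 if the index is out of range. *)
Definition ent (X : tensor) (i : nat -> nat) : R :=
  if [pick idx : tindex (tdims X) | [forall n, (idx n : nat) == i n]]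
  is Some idx then tent X idx else 0.

Definition valid_idx (X : tensor) (i : nat -> nat) : Prop :=
  forall n, (n < tord X)%N -> (i n < dim X n)%N.

Definition is_zero (X : tensor) : Prop := forall idx, tent X idx = 0.

Definition rank_one (X : tensor) : Prop :=
  exists a : nat -> nat -> R,
    (forall n, (n < tord X)%N -> exists k, (k < dim X n)%N /\ a n k != 0) /\
    (forall i, valid_idx X i -> ent X i = \prod_(n < tord X) a n (i n)).

Definition is_identity (M N : nat) (X : tensor) : Prop :=
  tord X = N /\ (forall n, (n < N)%N -> dim X n = M) /\
  forall i, valid_idx X i ->
    ent X i = if [forall n : 'I_N, i n == i 0%N] then 1 else 0.

Definition scaled (a : R) (X Y : tensor) : Prop :=
  (tdims X : seq nat) = tdims Y /\ forall i, ent Y i = a * ent X i.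

(* Y is the mode-permutation of X by p in S_N:
   y_{i_1..i_N} = x_{i_{p(1)}..i_{p(N)}} (so the dimension of mode p(k) of Y
   is the dimension of mode k of X). *)
Definition permidx (N : nat) (p : {perm 'I_N}) (i : nat -> nat) : nat -> nat :=
  fun k => if @insub _ (fun k => (k < N)%N) 'I_N k is Some k' then i (val (p k'))
           else 0%N.

Definition mode_perm (X Y : tensor) : Prop :=
  tord Y = tord X /\
  exists p : {perm 'I_(tord X)},
    (forall k : 'I_(tord X), dim Y (p k) = dim X k) /\
    forall i, valid_idx Y i -> ent Y i = ent X (permidx p i).

Definition subtensor (Y X : tensor) : Prop :=
  tord Y = tord X /\
  exists f : nat -> nat -> nat,
    (forall n, (n < tord X)%N ->
       (forall j j', (j < j')%N -> (j' < dim Y n)%N -> (f n j < f n j')%N) /\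
       (forall j, (j < dim Y n)%N -> (f n j < dim X n)%N)) /\
    forall i, valid_idx Y i -> ent Y i = ent X (fun n => f n (i n)).

Definition sim_step (X Y : tensor) : Prop :=
  (exists a, a != 0 /\ scaled a X Y) \/ mode_perm X Y.

Definition sim : relation tensor := clos_refl_sym_trans tensor sim_step.

(* the matrix of a tensor whose modes other than p, q all have size 1 *)
Definition flatmx (Y : tensor) (p q : nat) : 'M[R]_(dim Y p, dim Y q) :=
  \matrix_(i < dim Y p, j < dim Y q)
     ent Y (fun n => if n == p then (i : nat) else if n == q then (j : nat) else 0%N).

Definition submatrix_rank (Y : tensor) (k : nat) : Prop :=
  (exists p, (p < tord Y)%N /\
     (forall n, (n < tord Y)%N -> n != p -> dim Y n = 1%N) /\
     ((is_zero Y /\ k = 0%N) \/ (~ is_zero Y /\ k = 1%N)))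
  \/
  (exists p q, (p < q)%N /\ (q < tord Y)%N /\
     (forall n, (n < tord Y)%N -> n != p -> n != q -> dim Y n = 1%N) /\
     k = \rank (flatmx Y p q)).

Definition QZC (s : tensor -> nat) : Prop :=
  (forall X, s X = 0%N <-> is_zero X) /\
  (forall X, s X = 1%N <-> rank_one X) /\
  (forall M N X, (2 <= N)%N -> is_identity M N X -> s X = M) /\
  (forall X, (2 <= tord X)%N ->
     (forall n, (2 <= n)%N -> (n < tord X)%N -> dim X n = 1%N) ->
     s X = \rank (flatmx X 0 1)) /\
  (forall a X Y, a != 0 -> scaled a X Y -> s Y = s X) /\
  (forall X Y, mode_perm X Y -> s Y = s X) /\
  (forall X Y, subtensor Y X -> (s Y <= s X)%N).

Definition S0 (X : tensor) (M : nat) : Prop :=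
  exists Y Z, sim Y X /\ subtensor Z Y /\ is_identity M (tord X) Z.

Definition S1 (X : tensor) (k : nat) : Prop :=
  exists Y Z, sim Y X /\ subtensor Z Y /\ submatrix_rank Z k.

Definition is_max (P : nat -> Prop) (m : nat) : Prop :=
  P m /\ forall k, P k -> (k <= m)%N.

Definition is_min (P : nat -> Prop) (m : nat) : Prop :=
  P m /\ forall k, P k -> (m <= k)%N.

(* mu(X) = min { s(X) | s QZC } : "is_min (mu_set X) m" means mu(X) = m *)
Definition mu_set (X : tensor) (m : nat) : Prop :=
  exists s, QZC s /\ s X = m.

End Tensors.

(* Every QZC function s dominates r: if X is neither zero nor rank one then
   s X >= 2; an identity subtensor I_{M,N} of some Y ~ X gives
   M = s(I_{M,N}) <= s Y = s X; and a rank-k submatrix of some Y ~ X can be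
   moved by a mode permutation onto the first two modes, where QZC3 evaluates
   s to k.  Conversely r is itself a QZC function.  Monotonicity under
   subtensors holds because ~ commutes with taking subtensors, so S_0 and S_1
   only grow from a subtensor to the whole tensor.  Every tensor equivalent to
   I_{M,N} has all its dimensions equal to M, which bounds S_0 and S_1 by M.
   For a matrix X of order N, S_1 consists of ranks of submatrices of X, while
   an identity subtensor is itself a matrix when N = 2 and meets a mode of
   dimension 1 when N > 2. *)
From Pilot Require Import Defs.
From HB Require Import structures.
From mathcomp Require Import all_boot all_order all_algebra.
From mathcomp Require Import reals.
From mathcomp Require Import fingroup perm.
From Stdlib Require Import Relations Classical.
Set Implicit Arguments. Unset Strict Implicit. Unset Printing Implicit Defensive.
Import Order.TTheory GRing.Theory Num.Theory.
Local Open Scope ring_scope.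
Local Notation dim := Defs.dim.

Section Entries.
Variable R : fieldType.
Implicit Types X Y Z W : tensor R.

Definition index_fun N (d : N.-tuple nat) (idx : tindex d) : nat -> nat :=
  fun n => if @insub _ (fun k => (k < N)%N) 'I_N n is Some k then (idx k : nat) else 0%N.

Lemma index_funE N (d : N.-tuple nat) (idx : tindex d) (k : 'I_N) : index_fun idx k = idx k.
Proof.
rewrite /index_fun; case: insubP => [k' _ Hk|]; last by rewrite ltn_ord.
by have -> : k' = k by apply: val_inj.
Qed.

Lemma dim_tnth X (n : 'I_(tord X)) : tnth (tdims X) n = dim X n.
Proof. by rewrite /dim (tnth_nth 0%N). Qed.

Lemma dim_gt0 X n : (n < tord X)%N -> (0 < dim X n)%N.
Proof.
move=> Hn; have /andP [_ /allP Hdims] := tvalid X; apply: Hdims.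
by apply: mem_nth; rewrite size_tuple.
Qed.

Lemma tord_gt0 X : (0 < tord X)%N.
Proof. by have /andP [] := tvalid X. Qed.

Lemma entE X (idx : tindex (tdims X)) (i : nat -> nat) :
  (forall n, (idx n : nat) = i n) -> ent X i = tent X idx.
Proof.
move=> Hi; rewrite /ent; case: pickP => [idx' /forallP Hidx'|/(_ idx)].
  have -> // : idx' = idx.
  by apply/ffunP => n; apply: val_inj; exact: etrans (eqP (Hidx' n)) (esym (Hi n)).
by move/forallP => -[] n; rewrite Hi.
Qed.

Lemma valid_idx_index X (i : nat -> nat) : valid_idx X i ->
  exists idx : tindex (tdims X), forall n, (idx n : nat) = i n.
Proof.
move=> Hi; have Hlt (n : 'I_(tord X)) : (i n < tnth (tdims X) n)%N by rewrite dim_tnth Hi.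
exists (@finfun _ (fun n => 'I_(tnth (tdims X) n)) (fun n => Ordinal (Hlt n))).
by move=> n; rewrite ffunE.
Qed.

Lemma ent_invalid X (i : nat -> nat) : ~ valid_idx X i -> ent X i = 0.
Proof.
move=> Hi; rewrite /ent; case: pickP => [idx /forallP Hidx|//].
exfalso; apply: Hi => n Hn.
by rewrite -(eqP (Hidx (Ordinal Hn))) -(dim_tnth (Ordinal Hn)).
Qed.

Lemma eq_ent X (i j : nat -> nat) :
  (forall n, (n < tord X)%N -> i n = j n) -> ent X i = ent X j.
Proof.
move=> Hij; rewrite /ent.
rewrite (@eq_pick _ _ (fun idx : tindex (tdims X) => [forall n, (idx n : nat) == j n])) //.
by move=> idx /=; apply: eq_forallb => n; rewrite Hij.
Qed.

Lemma is_zeroP X : is_zero X <-> forall i, ent X i = 0.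
Proof.
split=> [X0 i|X0 idx].
  case: (classic (valid_idx X i)) => Hi; last exact: ent_invalid.
  by have [idx Hidx] := valid_idx_index Hi; rewrite (entE Hidx).
by rewrite -(X0 (index_fun idx)); symmetry; apply: entE => n; rewrite index_funE.
Qed.

Lemma nonzero_ent X : ~ is_zero X -> exists2 i, valid_idx X i & ent X i != 0.
Proof.
move=> X0; apply: NNPP => Hno; apply: X0; apply/is_zeroP => i.
case: (classic (valid_idx X i)) => Hi; last exact: ent_invalid.
by apply/eqP; apply: contraT => Hx; exfalso; apply: Hno; exists i.
Qed.

Definition tensor_of N (d : N.-tuple nat) (Hd : (0 < N)%N && all (fun k => 0 < k)%N d)
  (g : (nat -> nat) -> R) : tensor R :=
  @Tensor R N d [ffun idx => g (index_fun idx)] Hd.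

Lemma ent_tensor_of N (d : N.-tuple nat) Hd g (i : nat -> nat) :
  (forall i j, (forall n, (n < N)%N -> i n = j n) -> g i = g j) ->
  valid_idx (@tensor_of N d Hd g) i -> ent (tensor_of Hd g) i = g i.
Proof.
move=> Hg Hi; have [idx Hidx] := valid_idx_index Hi.
rewrite (entE Hidx) /= ffunE; apply: Hg => n Hn.
by rewrite -[n]/(nat_of_ord (Ordinal Hn)) index_funE Hidx.
Qed.

End Entries.

(* Mode permutations are handled as mutually inverse maps of [0, N) on nat,
   which avoids dependently typed ordinals. *)
Definition perm_pair N (g h : nat -> nat) :=
  [/\ forall k, (k < N)%N -> (g k < N)%N, forall k, (k < N)%N -> (h k < N)%N,
      forall k, (k < N)%N -> h (g k) = k & forall k, (k < N)%N -> g (h k) = k].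

Lemma perm_pair_sym N g h : perm_pair N g h -> perm_pair N h g.
Proof. by case. Qed.

Lemma perm_pair_comp N g h g' h' :
  perm_pair N g h -> perm_pair N g' h' -> perm_pair N (g' \o g) (h \o h').
Proof.
case=> Hg Hh Hhg Hgh [Hg' Hh' Hhg' Hgh']; split=> k Hk /=.
- by apply: Hg'; apply: Hg.
- by apply: Hh; apply: Hh'.
- by rewrite Hhg' ?Hhg // Hg.
- by rewrite Hgh ?Hgh' // Hh'.
Qed.

Lemma perm_pair_inj N g h a b : perm_pair N g h -> (a < N)%N -> (b < N)%N ->
  (g a == g b) = (a == b).
Proof.
case=> _ _ Hhg _ Ha Hb; apply/eqP/eqP => [Eab|-> //].
by rewrite -(Hhg a Ha) Eab Hhg.
Qed.

Definition swapn (a b n : nat) : nat := if n == a then b else if n == b then a else n.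

Lemma swapnK a b : involutive (swapn a b).
Proof.
move=> k; rewrite /swapn; case: (k =P a) => [->|Hka].
  by case: (b =P a) => [->|]; rewrite ?eqxx.
case: (k =P b) => [->|Hkb]; first by rewrite eqxx.
by case: (k =P a) => //; case: (k =P b).
Qed.

Lemma perm_pair_swapn N a b : (a < N)%N -> (b < N)%N -> perm_pair N (swapn a b) (swapn a b).
Proof.
move=> Ha Hb; have Hlt k : (k < N)%N -> (swapn a b k < N)%N.
  by rewrite /swapn; case: eqP => _ //; case: eqP.
by split=> // k _; rewrite swapnK.
Qed.

Definition perm_nat N (s : {perm 'I_N}) (n : nat) : nat :=
  if @insub _ (fun k => (k < N)%N) 'I_N n is Some k then (s k : nat) else n.

Lemma perm_natE N (s : {perm 'I_N}) (k : 'I_N) : perm_nat s k = s k.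
Proof.
rewrite /perm_nat; case: insubP => [k' _ Hk|]; last by rewrite ltn_ord.
by have -> : k' = k by apply: val_inj.
Qed.

Lemma permidxE N (s : {perm 'I_N}) (i : nat -> nat) (k : 'I_N) : permidx s i k = i (s k).
Proof.
rewrite /permidx; case: insubP => [k' _ Hk|]; last by rewrite ltn_ord.
by have -> : k' = k by apply: val_inj.
Qed.

Lemma perm_pair_perm_nat N (s : {perm 'I_N}) : perm_pair N (perm_nat s) (perm_nat s^-1%g).
Proof.
by split=> k Hk; rewrite -[k]/(nat_of_ord (Ordinal Hk)) !perm_natE ?permK ?permKV.
Qed.

Section ModePermutations.
Variable R : fieldType.
Implicit Types X Y Z W : tensor R.

Definition mode_perm_by X Y (g : nat -> nat) :=
  [/\ tord Y = tord X, forall k, (k < tord X)%N -> dim Y (g k) = dim X k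
    & forall i, valid_idx Y i -> ent Y i = ent X (i \o g)].

Lemma mode_permE X Y :
  mode_perm X Y <-> exists g h, perm_pair (tord X) g h /\ mode_perm_by X Y g.
Proof.
split=> [[EXY [s [Hdim Hent]]]|[g [h [[Hg Hh Hhg Hgh] [EXY Hdim Hent]]]]].
  exists (perm_nat s), (perm_nat s^-1%g); split; first exact: perm_pair_perm_nat.
  split=> // [k Hk|i Hi]; first by rewrite -[k]/(nat_of_ord (Ordinal Hk)) perm_natE Hdim.
  rewrite Hent //; apply: eq_ent => n Hn.
  by rewrite /= -[n]/(nat_of_ord (Ordinal Hn)) perm_natE permidxE.
pose f (k : 'I_(tord X)) : 'I_(tord X) := Ordinal (Hg k (ltn_ord k)).
have f_inj : injective f.
  by move=> k1 k2 /(congr1 val) /= Ek; apply: val_inj; rewrite /= -(Hhg k1) // Ek Hhg.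
split=> //; exists (perm f_inj); split=> [k|i Hi]; first by rewrite permE /= Hdim.
rewrite Hent //; apply: eq_ent => n Hn.
by rewrite -[n]/(nat_of_ord (Ordinal Hn)) permidxE permE.
Qed.

Lemma mode_perm_by_dim X Y g h n : perm_pair (tord X) g h -> mode_perm_by X Y g ->
  (n < tord X)%N -> dim Y n = dim X (h n).
Proof. by case=> _ Hh _ Hgh [_ Hdim _] Hn; rewrite -{1}(Hgh n Hn) Hdim ?Hh. Qed.

Lemma mode_perm_by_sym X Y g h : perm_pair (tord X) g h -> mode_perm_by X Y g ->
  mode_perm_by Y X h.
Proof.
move=> gh XY; have [Hg Hh Hhg Hgh] := gh; have [EXY Hdim Hent] := XY.
split=> // [k|i Hi]; first by rewrite EXY => Hk; rewrite (mode_perm_by_dim gh XY).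
rewrite Hent; last by move=> n; rewrite EXY => Hn; rewrite (mode_perm_by_dim gh XY) // Hi ?Hh.
by apply: eq_ent => n Hn /=; rewrite Hhg.
Qed.

Lemma mode_perm_by_exists X g h : perm_pair (tord X) g h -> exists Y, mode_perm_by X Y g.
Proof.
case=> Hg Hh Hhg Hgh; pose d := [tuple dim X (h k) | k < tord X].
have Hd n : (n < tord X)%N -> nth 0%N d n = dim X (h n).
  by move=> Hn; rewrite -[n]/(nat_of_ord (Ordinal Hn)) nth_mktuple.
have Hvalid : (0 < tord X)%N && all (fun k => 0 < k)%N d.
  rewrite tord_gt0; apply/allP => x /(nthP 0%N) [n]; rewrite size_tuple => Hn <-.
  by rewrite Hd // dim_gt0 ?Hh.
exists (tensor_of Hvalid (fun i => ent X (i \o g))); split=> // [k Hk|i Hi].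
  by rewrite /dim /= Hd ?Hhg ?Hg.
by rewrite ent_tensor_of // => i1 i2 Hi12; apply: eq_ent => n Hn; rewrite /= Hi12 ?Hg.
Qed.

Lemma scaled_dims a X Y : scaled a X Y -> tord Y = tord X /\ forall n, dim Y n = dim X n.
Proof.
case=> EXY _; split; last by move=> n; rewrite /dim EXY.
by rewrite -(size_tuple (tdims X)) -(size_tuple (tdims Y)) EXY.
Qed.

Lemma scaled_exists a X : exists Y, scaled a X Y.
Proof.
exists (tensor_of (tvalid X) (fun i => a * ent X i)); split=> // i.
case: (classic (valid_idx X i)) => Hi; last by rewrite !ent_invalid ?mulr0.
by rewrite ent_tensor_of // => i1 i2 Hi12; rewrite (eq_ent Hi12).
Qed.

Lemma sim_step_sym X Y : sim_step X Y -> sim_step Y X.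
Proof.
case=> [[a [a0 [EXY Hent]]]|/mode_permE [g [h [gh XY]]]].
  left; exists a^-1; split; first by rewrite invr_eq0.
  by split=> // i; rewrite Hent mulrA mulVf ?mul1r.
right; apply/mode_permE; exists h, g; case: (XY) => EXY _ _.
by rewrite EXY; split; [exact: perm_pair_sym | exact: mode_perm_by_sym gh XY].
Qed.

Lemma sim_invariant (P : tensor R -> Prop) :
  (forall X Y, sim_step X Y -> P X -> P Y) -> forall X Y, sim X Y -> P X <-> P Y.
Proof.
move=> HP X Y; elim=> {X Y} [X Y XY | X | X Y _ IH | X Y Z _ IH1 _ IH2]; try tauto.
by split; apply: HP => //; exact: sim_step_sym.
Qed.

Lemma sim_zero X Y : sim X Y -> is_zero X -> is_zero Y.
Proof.
move=> XY; have step Z W : sim_step Z W -> is_zero Z -> is_zero W.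
  case=> [[a [_ [_ Hent]]]|/mode_permE [g [h [_ [_ _ Hent]]]]] /is_zeroP Z0.
    by apply/is_zeroP => i; rewrite Hent Z0 mulr0.
  apply/is_zeroP => i; case: (classic (valid_idx W i)) => Hi; last exact: ent_invalid.
  by rewrite Hent.
by have [] := sim_invariant step XY.
Qed.

Lemma sim_dim X Y : sim X Y ->
  forall n, (n < tord Y)%N -> exists2 m, (m < tord X)%N & dim Y n = dim X m.
Proof.
pose P Z := forall n, (n < tord Z)%N -> exists2 m, (m < tord X)%N & dim Z n = dim X m.
move=> XY; have step Z W : sim_step Z W -> P Z -> P W.
  rewrite /P => -[[a [_ /scaled_dims [EWZ dWZ]]]|/mode_permE [g [h [gh ZW]]]] HZ n.
    by rewrite EWZ dWZ; exact: HZ.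
  case: (ZW) => -> _ _ Hn; rewrite (mode_perm_by_dim gh ZW Hn); apply: HZ.
  by case: gh => _ Hh _ _; apply: Hh.
have [PX _] := sim_invariant step XY; apply: PX => n Hn; by exists n.
Qed.

End ModePermutations.

Lemma strict_incr_leq (f : nat -> nat) J I :
  (forall j j', (j < j')%N -> (j' < J)%N -> (f j < f j')%N) ->
  (forall j, (j < J)%N -> (f j < I)%N) -> (J <= I)%N.
Proof.
move=> f_incr f_lt; case: J f_incr f_lt => [//|J] f_incr f_lt.
have f_ge : forall j, (j <= J)%N -> (j <= f j)%N.
  elim=> [//|j IHj] Hj; apply: leq_ltn_trans (IHj (ltnW Hj)) _; exact: f_incr.
exact: leq_ltn_trans (f_ge J (leqnn J)) (f_lt J (ltnSn J)).
Qed.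

Lemma rst_simulation (A : Type) (S T : relation A) :
  (forall x y, S x y -> S y x) ->
  (forall x x' y, S x x' -> T x y -> exists2 y', S y y' & T x' y') ->
  forall x x' y, clos_refl_sym_trans A S x x' -> T x y ->
    exists2 y', clos_refl_sym_trans A S y y' & T x' y'.
Proof.
move=> S_sym S_T x x' y xx'; move: y.
(* the symmetry rule of the closure forces proving both directions at once *)
suff [] : (forall y, T x y -> exists2 y', clos_refl_sym_trans A S y y' & T x' y') /\
          (forall y, T x' y -> exists2 y', clos_refl_sym_trans A S y y' & T x y') by [].
elim: xx' => {x x'} [a b ab | a | a b _ [IH1 IH2] | a b c _ [IH1 IH2] _ [IH3 IH4]].
- split=> y Ty; [have [y' yy' Ty'] := S_T _ _ _ ab Ty | have [y' yy' Ty'] := S_T _ _ _ (S_sym _ _ ab) Ty];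
    by exists y' => //; apply: rst_step.
- by split=> y Ty; exists y => //; apply: rst_refl.
- by split.
- split=> y Ty.
    have [y1 yy1 Ty1] := IH1 y Ty; have [y2 y1y2 Ty2] := IH3 y1 Ty1.
    by exists y2 => //; exact: rst_trans yy1 y1y2.
  have [y1 yy1 Ty1] := IH4 y Ty; have [y2 y1y2 Ty2] := IH2 y1 Ty1.
  by exists y2 => //; exact: rst_trans yy1 y1y2.
Qed.

Section Subtensors.
Variable R : fieldType.
Implicit Types X Y Z W : tensor R.

Lemma subtensor_dim Y X n : subtensor Y X -> (n < tord X)%N -> (dim Y n <= dim X n)%N.
Proof.
by case=> _ [f [Hf _]] Hn; have [f_incr f_lt] := Hf n Hn; exact: strict_incr_leq f_incr f_lt.
Qed.

Lemma subtensor_refl X : subtensor X X.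
Proof.
split=> //; exists (fun _ j => j); split; last by move=> i _; apply: eq_ent.
by move=> n _; split.
Qed.

Lemma subtensor_trans Z Y X : subtensor Z Y -> subtensor Y X -> subtensor Z X.
Proof.
case=> EZY [f1 [Hf1 He1]] [EYX [f2 [Hf2 He2]]]; split; first by rewrite EZY.
exists (fun n j => f2 n (f1 n j)); split => [n Hn|i Hi].
  have HnY : (n < tord Y)%N by rewrite EYX.
  have [incr1 lt1] := Hf1 n HnY; have [incr2 lt2] := Hf2 n Hn.
  by split=> [j j' jj' Hj'|j Hj]; [apply: incr2; [apply: incr1 | apply: lt1] | apply/lt2/lt1].
rewrite He1 // He2 // => n Hn; have [_ lt1] := Hf1 n Hn; apply/lt1/Hi; by rewrite EZY.
Qed.

Lemma subtensor_scaled a Y X Y' X' :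
  subtensor Y X -> scaled a Y Y' -> scaled a X X' -> subtensor Y' X'.
Proof.
move=> [EYX [f [Hf Hent]]] YY' XX'.
have [EY dY] := scaled_dims YY'; have [EX dX] := scaled_dims XX'.
case: YY' => _ eY; case: XX' => _ eX.
split; first by rewrite EY EX.
exists f; split=> [n|i Hi]; first by rewrite EX dY dX; apply: Hf.
by rewrite eY eX Hent // => n Hn; rewrite -dY; apply: Hi; rewrite EY.
Qed.

Lemma subtensor_mode_perm_by g h Y X Y' X' : subtensor Y X -> perm_pair (tord Y) g h ->
  mode_perm_by Y Y' g -> mode_perm_by X X' g -> subtensor Y' X'.
Proof.
move=> [EYX [f [Hf Hent]]] gh YY' XX'.
have [Hg Hh Hhg Hgh] := gh; have [EY dY eY] := YY'; have [EX dX eX] := XX'.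
have ghX : perm_pair (tord X) g h by rewrite -EYX.
split; first by rewrite EY EX.
exists (fun n => f (h n)); split=> [n|i Hi].
  rewrite EX -EYX => Hn; have HnX : (n < tord X)%N by rewrite -EYX.
  rewrite (mode_perm_by_dim gh YY' Hn) (mode_perm_by_dim ghX XX' HnX).
  by apply: Hf; rewrite -EYX Hh.
have Hig : valid_idx Y (i \o g) by move=> n Hn; rewrite -dY //; apply: Hi; rewrite EY Hg.
rewrite eY // Hent // eX; last first.
  move=> n; rewrite EX -EYX => Hn; have HnX : (n < tord X)%N by rewrite -EYX.
  have HhnX : (h n < tord X)%N by rewrite -EYX Hh.
  rewrite (mode_perm_by_dim ghX XX' HnX); have [_ lt] := Hf (h n) HhnX; apply: lt.
  by rewrite -(mode_perm_by_dim gh YY') //; apply: Hi; rewrite EY.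
by apply: eq_ent => n Hn /=; rewrite Hhg // EYX.
Qed.

Lemma sim_step_subtensor_push Y Y' X : sim_step Y Y' -> subtensor Y X ->
  exists2 X', sim_step X X' & subtensor Y' X'.
Proof.
case=> [[a [a0 YY']]|/mode_permE [g [h [gh YY']]]] YX.
  have [X' XX'] := scaled_exists a X; exists X'; first by left; exists a.
  exact: subtensor_scaled YX YY' XX'.
have ghX : perm_pair (tord X) g h by case: YX => <-.
have [X' XX'] := mode_perm_by_exists ghX; exists X'.
  by right; apply/mode_permE; exists g, h.
exact: subtensor_mode_perm_by YX gh YY' XX'.
Qed.

Lemma sim_step_subtensor_pull X X' Y : sim_step X X' -> subtensor Y X ->
  exists2 Y', sim_step Y Y' & subtensor Y' X'.
Proof.
case=> [[a [a0 XX']]|/mode_permE [g [h [gh XX']]]] YX.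
  have [Y' YY'] := scaled_exists a Y; exists Y'; first by left; exists a.
  exact: subtensor_scaled YX YY' XX'.
have ghY : perm_pair (tord Y) g h by case: YX => ->.
have [Y' YY'] := mode_perm_by_exists ghY; exists Y'.
  by right; apply/mode_permE; exists g, h.
exact: subtensor_mode_perm_by YX ghY YY' XX'.
Qed.

Lemma sim_subtensor_push Y Y' X : sim Y Y' -> subtensor Y X ->
  exists2 X', sim X X' & subtensor Y' X'.
Proof.
by move=> YY' YX; apply: (rst_simulation (@sim_step_sym R) (@sim_step_subtensor_push) YY' YX).
Qed.

Lemma sim_subtensor_pull X X' Y : sim X X' -> subtensor Y X ->
  exists2 Y', sim Y Y' & subtensor Y' X'.
Proof.
move=> XX' YX.
by apply: (rst_simulation (T := fun X Y => subtensor Y X) (@sim_step_sym R)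
  (@sim_step_subtensor_pull) XX' YX).
Qed.

Lemma subtensor_neq0 Y X : subtensor Y X -> ~ is_zero Y -> ~ is_zero X.
Proof.
move=> [_ [f [_ Hent]]] Y0 /is_zeroP X0; apply: Y0; apply/is_zeroP => i.
by case: (classic (valid_idx Y i)) => Hi; [rewrite Hent | exact: ent_invalid].
Qed.

Lemma subtensor_rank_one Y X : subtensor Y X -> rank_one X -> ~ is_zero Y -> rank_one Y.
Proof.
move=> [EYX [f [Hf Hent]]] [a [_ Ha]] /nonzero_ent [i Hi Yi].
have Hif j : valid_idx Y j -> valid_idx X (fun n => f n (j n)).
  by move=> Hj n Hn; have [_ lt] := Hf n Hn; apply/lt/Hj; rewrite EYX.
exists (fun n k => a n (f n k)); split=> [n Hn|j Hj]; last first.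
  by rewrite Hent // Ha; [rewrite EYX | exact: Hif].
have HnX : (n < tord X)%N by rewrite -EYX.
exists (i n); split; first exact: Hi.
by move: Yi; rewrite Hent // Ha => [/prodf_neq0 /(_ (Ordinal HnX) isT)|]; last exact: Hif.
Qed.

End Subtensors.

Section FunRank.
Variable R : fieldType.

Definition fnrank m n (F : nat -> nat -> R) := \rank (\matrix_(i < m, j < n) F i j).

Lemma eq_fnrank m n F G : (forall x y, (x < m)%N -> (y < n)%N -> F x y = G x y) ->
  fnrank m n F = fnrank m n G.
Proof.
by move=> FG; rewrite /fnrank; congr (\rank _); apply/matrixP => i j; rewrite !mxE FG.
Qed.

Lemma fnrank_tr m n F : fnrank m n F = fnrank n m (fun y x => F x y).
Proof. by rewrite /fnrank -mxrank_tr; congr (\rank _); apply/matrixP => i j; rewrite !mxE. Qed.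

Lemma fnrank_leq_row m n F : (fnrank m n F <= m)%N.
Proof. exact: rank_leq_row. Qed.

Lemma fnrank_leq_col m n F : (fnrank m n F <= n)%N.
Proof. exact: rank_leq_col. Qed.

Lemma mxrank_mxsub m n m' n' (f : 'I_m' -> 'I_m) (g : 'I_n' -> 'I_n) (A : 'M[R]_(m, n)) :
  (\rank (mxsub f g A) <= \rank A)%N.
Proof.
rewrite mxsubrc; apply: leq_trans (mxrankS (rowsub_sub _ _)) _.
have -> : colsub g A = (rowsub g A^T)^T by apply/matrixP => i j; rewrite !mxE.
by rewrite mxrank_tr -[X in (_ <= X)%N]mxrank_tr; apply/mxrankS/rowsub_sub.
Qed.

Lemma fnrank_sub m n m' n' F (a b : nat -> nat) :
  (forall x, (x < m')%N -> (a x < m)%N) -> (forall y, (y < n')%N -> (b y < n)%N) ->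
  (fnrank m' n' (fun x y => F (a x) (b y)) <= fnrank m n F)%N.
Proof.
move=> Ha Hb.
pose f (x : 'I_m') : 'I_m := Ordinal (Ha x (ltn_ord x)).
pose g (y : 'I_n') : 'I_n := Ordinal (Hb y (ltn_ord y)).
rewrite /fnrank; have -> : \matrix_(i < m', j < n') F (a i) (b j) =
   mxsub f g (\matrix_(i < m, j < n) F i j) by apply/matrixP => i j; rewrite !mxE.
exact: mxrank_mxsub.
Qed.

Lemma fnrank_scale m n F a : a != 0 -> fnrank m n (fun x y => a * F x y) = fnrank m n F.
Proof.
move=> a0; rewrite /fnrank -(mxrank_scale_nz (\matrix_(i < m, j < n) F i j) a0).
by congr (\rank _); apply/matrixP => i j; rewrite !mxE.
Qed.

Lemma fnrank_delta m : fnrank m m (fun x y => if x == y then 1 else 0) = m.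
Proof.
rewrite /fnrank -[RHS](mxrank1 R m); congr (\rank _).
by apply/matrixP => i j; rewrite !mxE val_eqE; case: (i == j).
Qed.

Lemma fnrank_eq0 m n F :
  fnrank m n F = 0%N <-> (forall x y, (x < m)%N -> (y < n)%N -> F x y = 0).
Proof.
rewrite /fnrank; split.
  move/eqP; rewrite mxrank_eq0 => /eqP F0 x y Hx Hy.
  by have := congr1 (fun M : 'M[R]_(m, n) => M (Ordinal Hx) (Ordinal Hy)) F0; rewrite !mxE.
by move=> F0; apply/eqP; rewrite mxrank_eq0; apply/eqP/matrixP => i j; rewrite !mxE F0.
Qed.

Lemma fnrank_outer m n F (u v : nat -> R) :
  (forall x y, (x < m)%N -> (y < n)%N -> F x y = u x * v y) -> (fnrank m n F <= 1)%N.
Proof.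
move=> Fuv; rewrite /fnrank.
have -> : \matrix_(i < m, j < n) F i j = (\col_(i < m) u i) *m (\row_(j < n) v j).
  by apply/matrixP => i j; rewrite !mxE big_ord1 !mxE Fuv.
exact: leq_trans (mxrankM_maxl _ _) (rank_leq_col _).
Qed.

Lemma mulmx_dim1_outer m n r (r1 : r = 1%N) (C : 'M[R]_(m, r)) (D : 'M[R]_(r, n)) :
  exists u v : nat -> R, forall (x : 'I_m) (y : 'I_n), (C *m D) x y = u x * v y.
Proof.
subst r; exists (fun x => if insub x is Some x' then C x' 0 else 0),
                (fun y => if insub y is Some y' then D 0 y' else 0).
by move=> x y; rewrite !mxE big_ord1 (valK x) (valK y).
Qed.

Lemma fnrank1_outer m n F : fnrank m n F = 1%N ->
  exists u v : nat -> R, forall x y, (x < m)%N -> (y < n)%N -> F x y = u x * v y.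
Proof.
rewrite /fnrank => rk1; set A := \matrix_(i < m, j < n) F i j.
have [u [v Huv]] := mulmx_dim1_outer rk1 (col_base A) (row_base A).
by exists u, v => x y Hx Hy; have := Huv (Ordinal Hx) (Ordinal Hy); rewrite mulmx_base mxE.
Qed.

End FunRank.

Section Flattening.
Variable R : fieldType.
Implicit Types X Y Z W : tensor R.

Definition pair_idx (p q x y : nat) : nat -> nat :=
  fun n => if n == p then x else if n == q then y else 0%N.

Lemma flatmx_rankE Y p q :
  \rank (flatmx Y p q) = fnrank (dim Y p) (dim Y q) (fun x y => ent Y (pair_idx p q x y)).
Proof. by []. Qed.

Lemma pair_idx_valid Y p q x y :
  (x < dim Y p)%N -> (y < dim Y q)%N -> valid_idx Y (pair_idx p q x y).
Proof. by move=> Hx Hy n Hn; rewrite /pair_idx; do 2?case: eqP => [-> //|_]; exact: dim_gt0. Qed.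

Lemma flatmx_rank_mode_perm_by Y W g h p q : perm_pair (tord Y) g h -> mode_perm_by Y W g ->
  p != q -> (p < tord Y)%N -> (q < tord Y)%N ->
  \rank (flatmx W (g p) (g q)) = \rank (flatmx Y p q).
Proof.
move=> gh YW pq Hp Hq; have [_ dW eW] := YW; rewrite !flatmx_rankE !dW //.
apply: eq_fnrank => x y Hx Hy; rewrite eW; last by apply: pair_idx_valid; rewrite dW.
by apply: eq_ent => m Hm; rewrite /pair_idx /= !(perm_pair_inj gh).
Qed.

Lemma flatmx_rank_swap Y p q : p != q -> \rank (flatmx Y q p) = \rank (flatmx Y p q).
Proof.
move=> pq; rewrite !flatmx_rankE fnrank_tr; apply: eq_fnrank => x y _ _.
apply: eq_ent => n _; rewrite /pair_idx.
by case: (n =P q) => [->|//]; rewrite eq_sym (negbTE pq).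
Qed.

Lemma flatmx_rank_scaled a Y W p q : a != 0 -> scaled a Y W ->
  \rank (flatmx W p q) = \rank (flatmx Y p q).
Proof.
move=> a0 YW; have [_ dW] := scaled_dims YW; case: YW => _ eW.
rewrite !flatmx_rankE !dW -(fnrank_scale _ _ (fun x y => ent Y (pair_idx p q x y)) a0).
by apply: eq_fnrank => x y _ _; rewrite eW.
Qed.

Lemma submatrix_rank_scaled a Y W k : a != 0 -> scaled a Y W ->
  submatrix_rank Y k -> submatrix_rank W k.
Proof.
move=> a0 YW; have [EW dW] := scaled_dims YW.
have YW0 : is_zero Y <-> is_zero W.
  by split; apply: sim_zero; [|apply: rst_sym]; apply: rst_step; left; exists a.
case=> [[p [Hp [Hd Hk]]]|[p [q [pq [Hq [Hd ->]]]]]].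
  left; exists p; rewrite EW; split=> //; split; last tauto.
  by move=> n Hn np; rewrite dW Hd.
right; exists p, q; rewrite EW (flatmx_rank_scaled p q a0 YW).
by do !split=> //; move=> n Hn np nq; rewrite dW Hd.
Qed.

Lemma submatrix_rank_mode_perm Y W k : mode_perm Y W ->
  submatrix_rank Y k -> submatrix_rank W k.
Proof.
move=> /[dup] YW /mode_permE [g [h [gh YWg]]]; have [Hg Hh _ Hgh] := gh.
have [EW _ _] := YWg.
have YW0 : is_zero Y <-> is_zero W.
  by split; apply: sim_zero; [|apply: rst_sym]; apply: rst_step; right.
have dW1 n p : (n < tord Y)%N -> n != g p -> dim W n = dim Y (h n) /\ h n != p.
  move=> Hn np; split; first exact: mode_perm_by_dim gh YWg Hn.
  by apply: contra np => /eqP <-; rewrite Hgh.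
case=> [[p [Hp [Hd Hk]]]|[p [q [pq [Hq [Hd ->]]]]]].
  left; exists (g p); rewrite EW; split; first exact: Hg.
  split; last tauto.
  by move=> n Hn np; have [-> hnp] := dW1 n p Hn np; apply: Hd; rewrite ?Hh.
have Hp : (p < tord Y)%N by apply: ltn_trans pq Hq.
have pq' : p != q by rewrite neq_ltn pq.
have Hd' n : (n < tord Y)%N -> n != g p -> n != g q -> dim W n = 1%N.
  move=> Hn np nq; have [-> hnp] := dW1 n p Hn np; have [_ hnq] := dW1 n q Hn nq.
  by apply: Hd; rewrite ?Hh.
have gpq : g p != g q by rewrite (perm_pair_inj gh).
right; rewrite EW -(flatmx_rank_mode_perm_by gh YWg pq' Hp Hq).
case: (ltngtP (g p) (g q)) => [lt|gt|eq]; last by rewrite eq eqxx in gpq.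
  by exists (g p), (g q); split=> //; split; [exact: Hg | split].
exists (g q), (g p); rewrite (flatmx_rank_swap _ gpq); split=> //; split; first exact: Hg.
by split=> // n Hn nq np; exact: Hd'.
Qed.

Lemma submatrix_rank_sim Y W k : sim Y W -> submatrix_rank Y k -> submatrix_rank W k.
Proof.
move=> YW; have step Z Z' : sim_step Z Z' -> submatrix_rank Z k -> submatrix_rank Z' k.
  case=> [[a [a0 ZZ']]|ZZ']; [exact: submatrix_rank_scaled ZZ' | exact: submatrix_rank_mode_perm].
by have [] := sim_invariant step YW.
Qed.

End Flattening.

Section SpecialTensors.
Variable R : fieldType.
Implicit Types X Y Z W : tensor R.

Lemma tord1_rank_one X : tord X = 1%N -> ~ is_zero X -> rank_one X.
Proof.
move=> X1 /nonzero_ent [i Hi Xi].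
have const (j : nat -> nat) : ent X j = ent X (fun=> j 0%N).
  by apply: eq_ent => n; rewrite X1; case: n.
exists (fun _ k => ent X (fun _ => k)); split=> [n Hn|j Hj].
  have n0 : n = 0%N by move: Hn; rewrite X1; case: n.
  by exists (i 0%N); rewrite -const n0 Hi // X1.
by rewrite const; move: (tord X) X1 => t ->; rewrite big_ord1.
Qed.

Lemma identity_dims M N X :
  is_identity M N X -> tord X = N /\ forall n, (n < tord X)%N -> dim X n = M.
Proof. by case=> XN [Hd _]; split=> // n; rewrite XN; apply: Hd. Qed.

Lemma identity_gt0 M N X : is_identity M N X -> (0 < M)%N.
Proof. by move=> /identity_dims [_ Hd]; rewrite -(Hd 0%N (tord_gt0 X)) dim_gt0 ?tord_gt0. Qed.

Lemma identity_ent M N X i : is_identity M N X -> (forall n, i n < M)%N ->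
  ent X i = if [forall n : 'I_N, i n == i 0%N] then 1 else 0.
Proof.
move=> IX Hi; have [_ Hd] := identity_dims IX; case: IX => _ [_ ->] //.
by move=> n Hn; rewrite Hd.
Qed.

Lemma identity_neq0 M N X : is_identity M N X -> ~ is_zero X.
Proof.
move=> IX /is_zeroP X0; have := identity_ent (i := fun=> 0%N) IX.
rewrite X0 => /(_ (fun=> identity_gt0 IX)).
by case: forallP => // _ /eqP; rewrite eq_sym oner_eq0.
Qed.

Lemma identity1_rank_one N X : is_identity 1 N X -> rank_one X.
Proof.
move=> IX; have [XN Hd] := identity_dims IX; case: IX => _ [_ Hent].
exists (fun _ _ => 1); split=> [n Hn|i Hi]; first by exists 0%N; rewrite Hd // oner_eq0.
have i0 m : (m < N)%N -> i m = 0%N.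
  move=> Hm; have HmX : (m < tord X)%N by rewrite XN.
  by apply/eqP; rewrite -leqn0 -ltnS -(Hd m HmX) Hi.
rewrite Hent // big1 //; case: forallP => // -[] n.
by rewrite !i0 // -XN tord_gt0.
Qed.

Lemma identity_not_rank_one M N X : (2 <= N)%N -> (2 <= M)%N ->
  is_identity M N X -> ~ rank_one X.
Proof.
move=> N2 M2 IX [a [_ Ha]]; have [XN _] := identity_dims IX.
have small i : (forall n, i n <= 1)%N -> ent X i = \prod_(n < tord X) a n (i n).
  move=> Hi; rewrite Ha // => n Hn; have [_ ->] := identity_dims IX; last exact: Hn.
  exact: leq_ltn_trans (Hi n) M2.
have diag c : (c <= 1)%N -> forall n : 'I_(tord X), a n c != 0.
  move=> Hc n; have : \prod_(n < tord X) a n c != 0.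
    rewrite -(small (fun=> c) (fun=> Hc)) (identity_ent IX); last by move=> m; exact: leq_ltn_trans Hc M2.
    by case: forallP => [_|[]//]; rewrite oner_eq0.
  by move/prodf_neq0/(_ n isT).
pose i2 n : nat := n != 0%N.
have i2_le1 n : (i2 n <= 1)%N by rewrite /i2; case: (_ != _).
have : ent X i2 != 0 by rewrite small //; apply/prodf_neq0 => n _; exact: diag.
rewrite (identity_ent IX); last by move=> n; exact: leq_ltn_trans (i2_le1 n) M2.
by case: forallP => [/(_ (Ordinal N2))|]; rewrite ?eqxx.
Qed.

Lemma identity2_flat_rank M X : is_identity M 2 X -> \rank (flatmx X 0 1) = M.
Proof.
move=> IX; have [X2 Hd] := identity_dims IX.
rewrite flatmx_rankE !Hd ?X2 // -[RHS](fnrank_delta R M); apply: eq_fnrank => x y Hx Hy.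
rewrite (identity_ent IX); last first.
  by move=> n; rewrite /pair_idx; case: eqP => _ //; case: eqP => _ //; exact: identity_gt0 IX.
congr (if _ then _ else _); apply/forallP/eqP => [/(_ (Ordinal (isT : (1 < 2)%N)))|->].
  by rewrite /pair_idx /= => /eqP.
by case=> [[|[|n]] Hn]; rewrite /pair_idx.
Qed.

End SpecialTensors.

Lemma prodr_ord_recl2 (R : pzSemiRingType) N (F : nat -> R) : (2 <= N)%N ->
  \prod_(n < N) F n = F 0%N * F 1%N * \prod_(n < N - 2) F n.+2.
Proof.
case: N => [|[|N]] // _; rewrite !big_ord_recl mulrA subSS subSS subn0.
by congr (_ * _); apply: eq_bigr.
Qed.

Section MatrixLike.
Variable R : fieldType.
Implicit Types X Y Z W : tensor R.

Definition matrix_like X :=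
  (2 <= tord X)%N /\ forall n, (2 <= n)%N -> (n < tord X)%N -> dim X n = 1%N.

Lemma matrix_like_ent X i : matrix_like X -> valid_idx X i ->
  ent X i = ent X (pair_idx 0 1 (i 0%N) (i 1%N)).
Proof.
move=> [_ dX1] Hi; apply: eq_ent => -[|[|n]] Hn //.
by have := Hi _ Hn; rewrite dX1 // ltnS leqn0 => /eqP.
Qed.

Lemma matrix_like_zero X : matrix_like X -> is_zero X <-> \rank (flatmx X 0 1) = 0%N.
Proof.
move=> mlX; have [X2 _] := mlX; rewrite flatmx_rankE fnrank_eq0; split.
  by move/is_zeroP => X0 x y _ _.
move=> X0; apply/is_zeroP => i.
case: (classic (valid_idx X i)) => Hi; last exact: ent_invalid.
by rewrite matrix_like_ent // X0 ?Hi // ltnW.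
Qed.

Lemma matrix_like_rank_one X : matrix_like X -> rank_one X -> (\rank (flatmx X 0 1) <= 1)%N.
Proof.
move=> [X2 _] [a [_ Ha]]; rewrite flatmx_rankE.
apply: (@fnrank_outer _ _ _ _ (fun x => a 0%N x * \prod_(n < tord X - 2) a n.+2 0%N) (a 1%N)).
move=> x y Hx Hy; rewrite Ha; last exact: pair_idx_valid.
by rewrite (prodr_ord_recl2 (fun n => a n (pair_idx 0 1 x y n))) // mulrAC.
Qed.

Lemma matrix_like_rank1 X : matrix_like X -> \rank (flatmx X 0 1) = 1%N -> rank_one X.
Proof.
move=> mlX; rewrite flatmx_rankE => rk1; have [X2 _] := mlX.
have [u [v Huv]] := fnrank1_outer rk1.
have [x [y [Hx Hy Xxy]]] : exists x y, [/\ (x < dim X 0)%N, (y < dim X 1)%N &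
    ent X (pair_idx 0 1 x y) != 0].
  apply: NNPP => Hno; move: rk1; rewrite (proj2 (fnrank_eq0 _ _ _)) // => x y Hx Hy.
  by apply/eqP; apply: contraT => Hxy; exfalso; apply: Hno; exists x, y.
move: Xxy; rewrite Huv // mulf_eq0 negb_or => /andP [ux0 vy0].
exists (fun n k => if n == 0%N then u k else if n == 1%N then v k else 1); split.
  by move=> -[|[|n]] Hn /=; [exists x | exists y | exists 0%N; rewrite dim_gt0 // oner_eq0].
move=> i Hi; rewrite matrix_like_ent // Huv ?Hi ?(ltnW X2) //.
by rewrite (prodr_ord_recl2 (fun n => if n == 0%N then u (i n) else if n == 1%N then v (i n) else 1)) //= big1 ?mulr1.
Qed.

Lemma matrix_like_submatrix_rank X : matrix_like X -> submatrix_rank X (\rank (flatmx X 0 1)).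
Proof.
move=> [X2 dX1]; right; exists 0%N, 1%N; do 2!split=> //.
by split=> // -[|[|n]] Hn //; rewrite dX1.
Qed.

Lemma subtensor_flat_rank Z X : matrix_like X -> subtensor Z X ->
  (\rank (flatmx Z 0 1) <= \rank (flatmx X 0 1))%N.
Proof.
move=> mlX [EZX [f [Hf Hent]]]; have [X2 dX1] := mlX.
have [_ lt0] := Hf 0%N (ltnW X2); have [_ lt1] := Hf 1%N X2.
rewrite !flatmx_rankE (@eq_fnrank _ _ _ _ (fun x y => ent X (pair_idx 0 1 (f 0%N x) (f 1%N y)))).
  by apply: fnrank_sub.
move=> x y Hx Hy; rewrite Hent; last by apply: pair_idx_valid.
rewrite matrix_like_ent // => -[|[|n]] Hn //=; [exact: lt0 | exact: lt1 |].
by have [_ ->] := Hf n.+2 Hn; rewrite ?dim_gt0 ?EZX.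
Qed.

Lemma submatrix_matrix_like Z p q : (p < q)%N -> (q < tord Z)%N ->
  (forall n, (n < tord Z)%N -> n != p -> n != q -> dim Z n = 1%N) ->
  exists2 W, sim_step Z W & matrix_like W /\ \rank (flatmx W 0 1) = \rank (flatmx Z p q).
Proof.
move=> pq Hq dZ1.
have Hp : (p < tord Z)%N by apply: ltn_trans pq Hq.
have Z1 : (1 < tord Z)%N by apply: leq_ltn_trans Hq; apply: leq_ltn_trans pq.
pose g := swapn 1 q \o swapn p 0; pose h := swapn p 0 \o swapn 1 q.
have gh : perm_pair (tord Z) g h by apply: perm_pair_comp; apply: perm_pair_swapn; rewrite // ltnW.
have q0 : q != 0%N by rewrite -lt0n; apply: leq_ltn_trans pq.
have gp : g p = 0%N by rewrite /g /= /swapn eqxx /= eq_sym (negbTE q0).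
have gq : g q = 1%N.
  rewrite /g /= /swapn (gtn_eqF pq) (negbTE q0).
  by case: (q =P 1%N) => [->|]; rewrite ?eqxx.
have [W ZW] := mode_perm_by_exists gh; have [WZ _ _] := ZW.
exists W; first by right; apply/mode_permE; exists g, h.
split; last by rewrite -(flatmx_rank_mode_perm_by gh ZW _ Hp Hq) ?gp ?gq // neq_ltn pq.
split=> [|n n2]; rewrite WZ // => Hn; rewrite (mode_perm_by_dim gh ZW Hn).
have [_ Hh _ Hgh] := gh; apply: dZ1; rewrite ?Hh //.
  by apply: contraTneq n2 => hp; rewrite -(Hgh n Hn) hp gp.
by apply: contraTneq n2 => hq; rewrite -(Hgh n Hn) hq gq.
Qed.

End MatrixLike.

Section Candidates.
Variable R : fieldType.
Implicit Types X Y Z W : tensor R.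

Lemma S0_le_dim X M : S0 X M -> forall n, (n < tord X)%N -> (M <= dim X n)%N.
Proof.
move=> [Y [Z [YX [ZY IZ]]]] n Hn; have [m Hm ->] := sim_dim YX Hn.
have [EZY _] := ZY; have [_ dZ] := identity_dims IZ.
have HmZ : (m < tord Z)%N by rewrite EZY.
by rewrite -(dZ m HmZ); exact: subtensor_dim ZY Hm.
Qed.

Lemma S1_le_dim X M k : (1 <= M)%N -> (forall n, (n < tord X)%N -> (dim X n <= M)%N) ->
  S1 X k -> (k <= M)%N.
Proof.
move=> M1 dXM [Y [Z [YX [ZY Hk]]]].
case: Hk => [[p [_ [_ [[_ ->]|[_ ->]]]]]|[p [q [pq [Hq [_ ->]]]]]] //.
have [EZY _] := ZY; have Hp : (p < tord Y)%N by rewrite -EZY; apply: ltn_trans pq Hq.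
have [m Hm dYp] := sim_dim (rst_sym _ _ _ _ YX) Hp.
rewrite flatmx_rankE; apply: leq_trans (fnrank_leq_row _ _ _) _.
by apply: leq_trans (subtensor_dim ZY Hp) _; rewrite dYp dXM.
Qed.

Lemma S0_tord2 X M : tord X = 2%N -> S0 X M -> S1 X M.
Proof.
move=> X2 [Y [Z [YX [ZY IZ]]]]; exists Y, Z; do 2!split=> //.
rewrite X2 in IZ; have [Z2 _] := identity_dims IZ.
rewrite -(identity2_flat_rank IZ); apply: matrix_like_submatrix_rank.
by split=> [|n n2]; rewrite Z2 // ltnNge n2.
Qed.

Lemma S0_subtensor Y X k : subtensor Y X -> S0 Y k -> S0 X k.
Proof.
move=> YX [Y' [Z [Y'Y [ZY' IZ]]]]; have [EYX _] := YX.
have [X' XX' Y'X'] := sim_subtensor_push (rst_sym _ _ _ _ Y'Y) YX.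
exists X', Z; split; first exact: rst_sym.
by split; [exact: subtensor_trans ZY' Y'X' | rewrite -EYX].
Qed.

Lemma S1_subtensor Y X k : subtensor Y X -> S1 Y k -> S1 X k.
Proof.
move=> YX [Y' [Z [Y'Y [ZY' Hk]]]].
have [X' XX' Y'X'] := sim_subtensor_push (rst_sym _ _ _ _ Y'Y) YX.
exists X', Z; split; first exact: rst_sym.
by split; first exact: subtensor_trans ZY' Y'X'.
Qed.

Lemma S1_matrix_like X k : matrix_like X -> (1 <= \rank (flatmx X 0 1))%N ->
  S1 X k -> (k <= \rank (flatmx X 0 1))%N.
Proof.
move=> mlX rk1 [Y [Z [YX [ZY Hk]]]].
have [Z' ZZ' Z'X] := sim_subtensor_pull YX ZY; have [EZX _] := Z'X.
case: (submatrix_rank_sim ZZ' Hk) => [[p [_ [_ [[_ ->]|[_ ->]]]]]|[p [q [pq [Hq [_ ->]]]]]] //.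
case: (leqP 2 q) => [q2|].
  have [_ dX1] := mlX; apply: leq_trans _ rk1; rewrite flatmx_rankE.
  apply: leq_trans (fnrank_leq_col _ _ _) _; rewrite EZX in Hq.
  by rewrite -(dX1 q) // subtensor_dim.
rewrite ltnS leq_eqVlt ltnS leqn0 => /orP [/eqP q1|/eqP q0]; last by rewrite q0 in pq.
have p0 : p = 0%N by apply/eqP; rewrite -leqn0 -ltnS -q1.
by rewrite p0 q1; apply: subtensor_flat_rank.
Qed.

Lemma QZC_sim s : QZC s -> forall X Y, sim X Y -> s X = s Y.
Proof.
move=> [_ [_ [_ [_ [s_scaled [s_perm _]]]]]] X Y XY.
have step Z W : sim_step Z W -> s Z = s X -> s W = s X.
  by case=> [[a [a0 ZW]]|ZW] <-; [exact: s_scaled ZW | exact: s_perm].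
by have [/(_ erefl) -> _] := sim_invariant step XY.
Qed.

Lemma QZC_ge2 s X : QZC s -> ~ is_zero X -> ~ rank_one X -> (2 <= s X)%N.
Proof.
move=> [s0 [s1 _]] X0 X1; case E: (s X) => [|[|k]] //.
  by exfalso; apply/X0/s0.
by exfalso; apply/X1/s1.
Qed.

Lemma S0_le_QZC s X M : QZC s -> (2 <= tord X)%N -> S0 X M -> (M <= s X)%N.
Proof.
move=> Qs X2 [Y [Z [YX [ZY IZ]]]]; have [_ [_ [s_id [_ [_ [_ s_sub]]]]]] := Qs.
by rewrite -(s_id _ _ _ X2 IZ) -(QZC_sim Qs YX) s_sub.
Qed.

Lemma S1_le_QZC s X k : QZC s -> (1 <= s X)%N -> S1 X k -> (k <= s X)%N.
Proof.
move=> Qs sX1 [Y [Z [YX [ZY Hk]]]]; have [_ [_ [_ [s_mx [_ [_ s_sub]]]]]] := Qs.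
case: Hk => [[p [_ [_ [[_ ->]|[_ ->]]]]]|[p [q [pq [Hq [dZ1 ->]]]]]] //.
have [W ZW [[W2 dW1] <-]] := submatrix_matrix_like pq Hq dZ1.
rewrite -s_mx // -(QZC_sim Qs (rst_step _ _ _ _ ZW)) -(QZC_sim Qs YX).
exact: s_sub.
Qed.

Lemma tord_ge2 X : ~ is_zero X -> ~ rank_one X -> (2 <= tord X)%N.
Proof.
move=> X0 X1; have := tord_gt0 X; case E: (tord X) => [|[|k]] // _.
by exfalso; apply/X1/tord1_rank_one.
Qed.

End Candidates.

Section Proposition.
Variables (R : fieldType) (r : tensor R -> nat).
Implicit Types X Y Z W : tensor R.

Hypothesis r0 : forall X, r X = 0%N <-> is_zero X.
Hypothesis r1 : forall X, r X = 1%N <-> rank_one X.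
Hypothesis r_sim : forall X Y, sim X Y -> r X = r Y.
Hypothesis r_max : forall X, ~ is_zero X -> ~ rank_one X ->
  is_max (fun k => S0 X k \/ S1 X k \/ k = 2%N) (r X).

Lemma r_le_QZC s X : QZC s -> (r X <= s X)%N.
Proof.
move=> Qs; have [s0 [s1 _]] := Qs.
case: (classic (is_zero X)) => X0; first by rewrite (proj2 (r0 X) X0).
case: (classic (rank_one X)) => X1; first by rewrite (proj2 (r1 X) X1) (proj2 (s1 X) X1).
have [rX _] := r_max X0 X1; have s2 := QZC_ge2 Qs X0 X1.
case: rX => [S0X|[S1X|->]] //.
  exact: S0_le_QZC Qs (tord_ge2 X0 X1) S0X.
exact: S1_le_QZC Qs (ltnW s2) S1X.
Qed.

Lemma r_identity M N X : (2 <= N)%N -> is_identity M N X -> r X = M.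
Proof.
move=> N2 IX; have [XN dX] := identity_dims IX.
case: M IX dX => [/identity_gt0 //|[|M]] IX dX; first exact/r1/identity1_rank_one/IX.
have [rX rX_max] := r_max (identity_neq0 IX) (identity_not_rank_one (M := M.+2) N2 isT IX).
apply/eqP; rewrite eqn_leq; apply/andP; split.
  case: rX => [S0X|[S1X|->]] //; last by apply: S1_le_dim S1X => // n Hn; rewrite dX.
  by rewrite -(dX 0%N (tord_gt0 X)); exact: S0_le_dim S0X 0%N (tord_gt0 X).
by apply: rX_max; left; exists X, X; rewrite XN; split; [exact: rst_refl | split; first exact: subtensor_refl].
Qed.

Lemma r_matrix_like X : matrix_like X -> r X = \rank (flatmx X 0 1).
Proof.
move=> mlX; case: (classic (is_zero X)) => X0.
  by rewrite (proj2 (r0 X) X0); symmetry; apply/(matrix_like_zero mlX).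
have rk0 : \rank (flatmx X 0 1) != 0%N by apply/eqP => /(matrix_like_zero mlX).
case: (classic (rank_one X)) => X1.
  by rewrite (proj2 (r1 X) X1); apply/eqP; rewrite eqn_leq matrix_like_rank_one // lt0n rk0.
have rk2 : (2 <= \rank (flatmx X 0 1))%N.
  move: rk0; case E: (\rank _) => [|[|]] // _.
  by exfalso; apply/X1/(matrix_like_rank1 mlX).
have [rX rX_max] := r_max X0 X1; apply/eqP; rewrite eqn_leq; apply/andP; split.
  case: rX => [S0X|[S1X|->]] //; last exact: S1_matrix_like mlX (ltnW rk2) S1X.
  have [X2 dX1] := mlX; case: (ltngtP (tord X) 2) => [|X3|X2']; first by rewrite ltnNge X2.
    by apply: leq_trans (S0_le_dim S0X X3) _; rewrite dX1 // ltnW.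
  exact: S1_matrix_like mlX (ltnW rk2) (S0_tord2 X2' S0X).
apply: rX_max; right; left; exists X, X; split; first exact: rst_refl.
by split; [exact: subtensor_refl | exact: matrix_like_submatrix_rank].
Qed.

Lemma r_subtensor X Y : subtensor Y X -> (r Y <= r X)%N.
Proof.
move=> YX; case: (classic (is_zero Y)) => Y0; first by rewrite (proj2 (r0 Y) Y0).
have X0 := subtensor_neq0 YX Y0.
case: (classic (rank_one Y)) => Y1.
  by rewrite (proj2 (r1 Y) Y1) lt0n; apply/eqP => /r0.
have X1 : ~ rank_one X by move=> /(subtensor_rank_one YX) /(_ Y0).
have [rY _] := r_max Y0 Y1; have [_ rX_max] := r_max X0 X1; apply: rX_max.
case: rY => [S0Y|[S1Y|->]]; last by right; right.
  by left; exact: S0_subtensor YX S0Y.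
by right; left; exact: S1_subtensor YX S1Y.
Qed.

Lemma r_QZC : QZC r.
Proof.
do 2!split=> //; split; first by move=> M N X; exact: r_identity.
split; first by move=> X X2 X1; exact: r_matrix_like.
split; first by move=> a X Y a0 XY; symmetry; apply/r_sim/rst_step; left; exists a.
split; first by move=> X Y XY; symmetry; apply/r_sim/rst_step; right.
by move=> X Y; exact: r_subtensor.
Qed.

End Proposition.

Theorem proposition3p7 (R : realType) (r : tensor R -> nat) :
  (forall X, r X = 0%N <-> is_zero X) ->
  (forall X, r X = 1%N <-> rank_one X) ->
  (forall X Y, sim X Y -> r X = r Y) ->
  (forall X, ~ is_zero X -> ~ rank_one X ->
     is_max (fun k => S0 X k \/ S1 X k \/ k = 2%N) (r X)) ->
  forall X, is_min (mu_set X) (r X).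
Proof.
move=> r0 r1 r_sim r_max X; split.
  by exists r; split=> //; exact: r_QZC.
by move=> k [s [Qs <-]]; exact: r_le_QZC.
Qed.
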